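(* Let $r$ be the maximal multiplicity of an eigenvalue in the spectrum $\Lambda$. Then for every unit vector $|\psi\rangle\in\mathbb{C}^{d_A}\otimes\mathbb{C}^{d_B}$, $\mathcal{E}_\Lambda(\psi)=0$ if and only if the Schmidt rank of $|\psi\rangle$ (the rank of $\mathrm{Tr}_B|\psi\rangle\langle\psi|$) is at most $r$. In particular, $\mathcal{E}_\Lambda$ vanishes exactly on product states if and only if $\Lambda$ consists of $d$ distinct values.
   Context: Let $d=d_A\le d_B$. A spectrum is a multiset $\Lambda=\{\lambda_1,\dots,\lambda_d\}$ of unimodular complex numbers. Let $\mathcal{W}_\Lambda$ be the set of unitary matrices on $\mathbb{C}^{d_A}$ whose eigenvalues, counted with multiplicity, are exactly $\Lambda$. Define $F^\Lambda_\psi=\max_{W\in\mathcal{W}_\Lambda}|\langle\psi|(W\otimes \mathbb{1}_B)|\psi\rangle|^2$ and $\mathcal{E}_\Lambda(\psi)=1-F^\Lambda_\psi$. *)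

(* Complex numbers: an arbitrary numClosedFieldType C
   (e.g. algC); conjugation is Num.conj, written x^*. *)
From HB Require Import structures.
From mathcomp Require Import all_boot all_order all_algebra.
Set Implicit Arguments. Unset Strict Implicit. Unset Printing Implicit Defensive.
Import Order.TTheory GRing.Theory Num.Theory.
Local Open Scope ring_scope.

Section Defs.
Variable C : numClosedFieldType.

Definition adjmx m n (A : 'M[C]_(m, n)) : 'M[C]_(n, m) := (map_mx Num.conj A)^T.

Definition unitary_mx n (W : 'M[C]_n) : bool := W *m adjmx W == 1%:M.

(* A vector |psi> in C^dA (x) C^dB is stored by its coordinates:
   |psi> = sum_{i,j} psi i j |i>|j>, with psi : 'M[C]_(dA, dB). *)
Definition unit_state dA dB (psi : 'M[C]_(dA, dB)) : bool :=
  \sum_i \sum_j `|psi i j| ^+ 2 == 1.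

(* <psi| (W (x) 1_B) |psi>; (W (x) 1)_{(i,j),(k,l)} = W i k * delta_{jl}. *)
Definition expect_W1 dA dB (W : 'M[C]_dA) (psi : 'M[C]_(dA, dB)) : C :=
  \sum_(i < dA) \sum_(j < dB) \sum_(k < dA) (psi i j)^* * W i k * psi k j.

Definition in_WLambda dA (Lam : dA.-tuple C) (W : 'M[C]_dA) : Prop :=
  unitary_mx W /\ char_poly W = \prod_(l <- Lam) ('X - l%:P).

Definition unimodular_spectrum dA (Lam : dA.-tuple C) : bool :=
  all (fun l => `|l| == 1) Lam.

Definition is_F_Lambda dA dB (Lam : dA.-tuple C) (psi : 'M[C]_(dA, dB)) (F : C)
  : Prop :=
  (exists2 W, in_WLambda Lam W & `|expect_W1 W psi| ^+ 2 = F) /\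
  (forall W, in_WLambda Lam W -> `|expect_W1 W psi| ^+ 2 <= F).

Definition E_Lambda (F : C) : C := 1 - F.

Definition ptraceB dA dB (psi : 'M[C]_(dA, dB)) : 'M[C]_dA :=
  \matrix_(i, k) \sum_(j < dB) psi i j * (psi k j)^*.

Definition schmidt_rank dA dB (psi : 'M[C]_(dA, dB)) : nat := \rank (ptraceB psi).

Definition max_mult dA (Lam : dA.-tuple C) : nat :=
  \max_(l <- Lam) count_mem l Lam.

End Defs.

(* Store |psi> as the dA x dB matrix of its coordinates; then
   <psi|(W (x) 1)|psi> is the Frobenius product of W psi with psi.  By
   Cauchy-Schwarz it has modulus 1 exactly when W psi = c psi, i.e. when the
   column space of psi, whose dimension is the Schmidt rank, lies in the
   c-eigenspace of W; a geometric multiplicity never exceeds the algebraic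
   one, so the Schmidt rank is at most the multiplicity of c in Lambda.
   Conversely, if the Schmidt rank is at most the maximal multiplicity r,
   attained by l, conjugate diag(l, ..., l, rest of Lambda) by a unitary whose
   first rows span the (conjugated) column space of psi: this W lies in
   W_Lambda and fixes psi up to the phase l.  Finally, r <= 1 exactly when
   Lambda has no repeated value, and a unit state of Schmidt rank 2 exists
   as soon as 2 <= dA <= dB. *)

From HB Require Import structures.
From mathcomp Require Import all_boot all_order all_algebra.
From mathcomp Require Import sesquilinear spectral.
Set Implicit Arguments. Unset Strict Implicit. Unset Printing Implicit Defensive.
Import Order.TTheory GRing.Theory Num.Theory.
Local Open Scope ring_scope.
Local Open Scope sesquilinear_scope.

Local Notation "''[' u , v ]" := (dotmx u v) : ring_scope.
Local Notation "''[' u ]" := (dotmx u u) : ring_scope.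

Section FrobeniusForm.
Variables (C : numClosedFieldType) (m n : nat).
Implicit Types (A B : 'M[C]_(m, n)) (W : 'M[C]_m).

Lemma dotmx_mxvec A B : '[mxvec A, mxvec B] = \sum_i \sum_j A i j * (B i j)^*.
Proof.
rewrite dotmxE mxE (reindex _ (curry_mxvec_bij _ _)) pair_bigA /=.
by apply: eq_bigr => -[i j] _; rewrite !mxE !mxvecE.
Qed.

Lemma dotmx_mxvec_trace A B : '[mxvec A, mxvec B] = \tr (A *m B ^t*).
Proof.
rewrite dotmx_mxvec; apply: eq_bigr => i _; rewrite mxE.
by apply: eq_bigr => j _; rewrite !mxE.
Qed.

Lemma dnorm_mxvec_unitary W A :
  W \is unitarymx -> '[mxvec (W *m A)] = '[mxvec A].
Proof.
move=> /unitarymxP /mulmx1C WtW.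
rewrite !dotmx_mxvec_trace mxtrace_mulC trmx_mul map_mxM mulmxA -(mulmxA _ (W ^t*)).
by rewrite WtW mulmx1 mxtrace_mulC.
Qed.
End FrobeniusForm.

Section UnitDotmx.
Variables (C : numClosedFieldType) (k : nat).
Implicit Types u v : 'rV[C]_k.

(* The library states Cauchy-Schwarz through the coercion of an abstract dot
   product; restating it for [dotmx] makes ['[u]] rewritable. *)
Let dotmx_CauchySchwarz u v :
  `|'[u, v]| ^+ 2 <= '[u] * '[v] ?= iff ~~ free [:: u; v].
Proof. exact: CauchySchwarz. Qed.

Lemma dotmx_unit_le1 u v : '[u] = 1 -> '[v] = 1 -> `|'[u, v]| ^+ 2 <= 1.
Proof. by move=> u1 v1; have [] := dotmx_CauchySchwarz u v; rewrite u1 v1 mulr1. Qed.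

Lemma dotmx_unit_eq1 u v : '[u] = 1 -> '[v] = 1 -> `|'[u, v]| ^+ 2 = 1 ->
  exists c, u = c *: v.
Proof.
move=> u1 v1 uv1; have [_] := dotmx_CauchySchwarz u v.
rewrite u1 v1 mulr1 uv1 eqxx free_cons span_seq1 seq1_free.
have v0 : v != 0.
  by apply: contra_eq_neq v1 => ->; rewrite dotmxE mul0mx mxE eq_sym oner_eq0.
by rewrite v0 andbT negbK => /esym /vlineP.
Qed.
End UnitDotmx.

Section CharPoly.
Variable R : comNzRingType.

Lemma char_poly_trmx n (A : 'M[R]_n) : char_poly A^T = char_poly A.
Proof.
rewrite /char_poly -det_tr; congr (\det _).
by rewrite /char_poly_mx raddfB /= tr_scalar_mx map_trmx trmxK.
Qed.

Lemma char_poly_conj p n (e : p = n) (U : 'M[R]_(p, n)) (V : 'M[R]_(n, p))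
    (M : 'M[R]_n) :
  V *m U = 1%:M -> char_poly (U *m M *m V) = char_poly M.
Proof.
subst p => VU; have UV := mulmx1C VU; rewrite /char_poly.
have -> : char_poly_mx (U *m M *m V) =
    map_mx polyC U *m char_poly_mx M *m map_mx polyC V.
  rewrite /char_poly_mx mulmxBr mulmxBl -!map_mxM mul_mx_scalar -scalemxAl.
  by rewrite -map_mxM UV map_mx1 scale_scalar_mx mulr1.
rewrite !det_mulmx mulrC mulrA -det_mulmx -map_mxM VU map_mx1 det1.
by rewrite mul1r.
Qed.

Lemma char_poly_lblock k l (A : 'M[R]_k) (B : 'M[R]_(l, k)) (D : 'M[R]_l) :
  char_poly (block_mx A 0 B D) = char_poly A * char_poly D.
Proof.
rewrite /char_poly /char_poly_mx (scalar_mx_block k l) map_block_mx map_mx0.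
by rewrite opp_block_mx add_block_mx oppr0 !addr0 add0r det_lblock.
Qed.

Lemma char_poly_scalar k (c : R) : char_poly (c%:M : 'M_k) = ('X - c%:P) ^+ k.
Proof.
rewrite char_poly_trig ?scalar_mx_is_trig // -[k in RHS]card_ord -prodr_const.
by apply: eq_bigr => i _; rewrite mxE eqxx.
Qed.

Lemma char_poly_diag k (d : 'rV[R]_k) :
  char_poly (diag_mx d) = \prod_(i < k) ('X - (d 0 i)%:P).
Proof.
rewrite char_poly_trig ?diag_mx_is_trig //.
by apply: eq_bigr => i _; rewrite mxE eqxx.
Qed.
End CharPoly.

Lemma diag_mx_unitary (C : numClosedFieldType) k (d : 'rV[C]_k) :
  (forall i, `|d 0 i| = 1) -> diag_mx d \is unitarymx.
Proof.
move=> d1; apply/unitarymxP; rewrite mul_diag_mx; apply/matrixP => i j.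
rewrite !mxE; have [<-|_] := eqVneq i j; last by rewrite mulr0n rmorph0 mulr0.
by rewrite mulr1n -normCK d1 expr1n.
Qed.

Section SchmidtCompletion.
Variables (C : numClosedFieldType) (m n : nat) (Phi : 'M[C]_(m, n)).

Local Notation ortho A :=
  (orthomx Num.Def.conjC (mx_of_hermitian (hermitian1mx _)) A).
Local Notation U := (schmidt_complete Phi).
Local Notation r := (\rank Phi).

Lemma schmidt_complete_dim : (r + \rank (ortho Phi))%N = n.
Proof. exact: add_rank_ortho. Qed.

Lemma schmidt_complete_adjK : U ^t* *m U = 1%:M.
Proof.
by have := mulmxKtV 1%:M (schmidt_complete_unitarymx Phi) schmidt_complete_dim;
  rewrite mul1mx.
Qed.

Lemma rsubmx_mul_schmidt_complete_adj : rsubmx (Phi *m U ^t*) = 0.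
Proof.
set S2 := schmidt (row_base (ortho Phi)).
have sS2 : (S2 <= ortho Phi)%MS by rewrite eqmx_schmidt_free ?row_base_free ?eq_row_base.
rewrite /schmidt_complete tr_col_mx map_row_mx mul_mx_row row_mxKr.
by move: sS2; rewrite orthomx1E => /eqP /(congr1 (map_mx Num.Def.conjC \o trmx)) /=;
  rewrite trmx_mul map_mxM trmxCK trmx0 map_mx0.
Qed.

Lemma XsubC_rank_dvd_char_poly (M : 'M[C]_n) c :
  Phi *m M = c *: Phi -> ('X - c%:P) ^+ r %| char_poly M.
Proof.
move=> PhiM; rewrite -(char_poly_conj schmidt_complete_dim M schmidt_complete_adjK).
have := unitarymxP (schmidt_complete_unitarymx Phi).
rewrite /schmidt_complete; set S1 := schmidt _; set S2 := schmidt _.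
rewrite tr_col_mx map_row_mx mul_col_row scalar_mx_block.
move=> /eq_block_mx [S1S1 S1S2 _ _].
have S1M : S1 *m M = c *: S1.
  have /submxP [D ->] : (S1 <= Phi)%MS.
    by rewrite eqmx_schmidt_free ?row_base_free ?eq_row_base.
  by rewrite -mulmxA PhiM scalemxAr.
set N := _ *m _ *m _.
have uN : usubmx N = row_mx c%:M 0.
  rewrite /N !mul_col_mx col_mxKu S1M -scalemxAl.
  by rewrite mul_mx_row S1S1 S1S2 scale_row_mx scalemx1 scaler0.
rewrite -[N]submxK /ulsubmx /ursubmx uN row_mxKl row_mxKr.
by rewrite char_poly_lblock char_poly_scalar dvdp_mulIl.
Qed.

Lemma rank_le_count_eigenrows (M : 'M[C]_n) c (s : seq C) :
  Phi *m M = c *: Phi -> char_poly M = \prod_(x <- s) ('X - x%:P) ->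
  (r <= count_mem c s)%N.
Proof.
move=> PhiM charM; have := XsubC_rank_dvd_char_poly PhiM.
by rewrite charM -mup_geq ?monic_neq0 ?monic_prod_XsubC // mu_prod_XsubC.
Qed.

Lemma exists_unitary_eigenrows (s : seq C) l :
  size s = n -> all (fun x => `|x| == 1) s -> (r <= count_mem l s)%N ->
  exists M : 'M[C]_n, [/\ M \is unitarymx,
    char_poly M = \prod_(x <- s) ('X - x%:P) & Phi *m M = l *: Phi].
Proof.
move=> size_s unit_s r_le.
(* s reordered so that the first r eigenvalues are l *)
pose t := nseq (count_mem l s) l ++ filter (predC1 l) s.
have perm_t : perm_eq t s.
  have /all_pred1P := filter_all (pred1 l) s.
  by rewrite size_filter /t => <-; apply/permPl/(perm_filterC (pred1 l)).
have size_t : size t = (r + \rank (ortho Phi))%N.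
  by rewrite schmidt_complete_dim -size_s; apply: perm_size.
pose d : 'rV[C]_(r + \rank (ortho Phi)) := \row_i t`_i.
have d_in i : d 0 i \in s.
  by rewrite mxE -(perm_mem perm_t) mem_nth // size_t.
have U_unitary := schmidt_complete_unitarymx Phi.
exists (U ^t* *m diag_mx d *m U); split.
- apply: mul_unitarymx => //; apply: mul_unitarymx.
    by apply/unitarymxP; rewrite trmxCK schmidt_complete_adjK.
  by apply: diag_mx_unitary => i; apply/eqP/(allP unit_s).
- rewrite (char_poly_conj (esym schmidt_complete_dim) _ (unitarymxP U_unitary)).
  rewrite char_poly_diag -(perm_big _ perm_t) /= (big_nth 0) size_t big_mkord.
  by apply: eq_bigr => i _; rewrite mxE.
have PhiUd : Phi *m U ^t* *m diag_mx d = l *: (Phi *m U ^t*).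
  rewrite -[Phi *m _]hsubmxK rsubmx_mul_schmidt_complete_adj.
  apply/matrixP => i j; rewrite mul_mx_diag !mxE.
  case: splitP => j' ->; rewrite mxE ?mul0r ?mulr0 // mulrC.
  by rewrite nth_cat size_nseq nth_nseq (leq_trans (ltn_ord j') r_le).
by rewrite !mulmxA PhiUd -scalemxAl -mulmxA schmidt_complete_adjK mulmx1.
Qed.
End SchmidtCompletion.

Lemma mxrank_mul_adj (C : numClosedFieldType) m n (A : 'M[C]_(m, n)) :
  \rank (A *m A ^t*) = \rank A.
Proof.
have := mxrank_mul_ker A (A ^t*); have := orthomx_ortho_disj A.
by rewrite /orthomx mul1mx => ->; rewrite mxrank0 addn0.
Qed.

Lemma exists_unit_dotmx_mxvec (C : numClosedFieldType) m n (A : 'M[C]_(m, n)) :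
  A != 0 -> exists2 a : C, a != 0 & '[mxvec (a *: A)] = 1.
Proof.
move=> A0; have q_gt0 : 0 < '[mxvec A] by apply: dotmx_is_dotmx; rewrite mxvec_eq0.
have dnormZ a : '[a *: mxvec A] = `|a| ^+ 2 * '[mxvec A] := dnormZ _ a _.
exists (sqrtC '[mxvec A])^-1; first by rewrite invr_eq0 sqrtC_eq0 gt_eqF.
rewrite linearZ dnormZ normfV ger0_norm ?sqrtC_ge0 ?ltW // exprVn sqrtCK.
by rewrite mulVf ?gt_eqF.
Qed.

Section BipartiteStates.
Variable C : numClosedFieldType.

Lemma unitary_mxE n (W : 'M[C]_n) : unitary_mx W = (W \is unitarymx).
Proof. by rewrite /unitary_mx /adjmx map_trmx. Qed.

Lemma expect_W1E m n (W : 'M[C]_m) (psi : 'M[C]_(m, n)) :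
  expect_W1 W psi = '[mxvec (W *m psi), mxvec psi].
Proof.
rewrite dotmx_mxvec; apply: eq_bigr => i _; apply: eq_bigr => j _.
rewrite mxE mulr_suml; apply: eq_bigr => k _.
by rewrite [RHS]mulrC mulrA.
Qed.

Lemma unit_stateE m n (psi : 'M[C]_(m, n)) : unit_state psi = ('[mxvec psi] == 1).
Proof.
rewrite /unit_state dotmx_mxvec; congr (_ == 1).
by apply: eq_bigr => i _; apply: eq_bigr => j _; rewrite normCK.
Qed.

Lemma schmidt_rankE m n (psi : 'M[C]_(m, n)) : schmidt_rank psi = \rank psi.
Proof.
rewrite /schmidt_rank -[in RHS]mxrank_mul_adj; congr (mxrank _).
by apply/matrixP => i k; rewrite !mxE; apply: eq_bigr => j _; rewrite !mxE.
Qed.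

Lemma unit_state_rank_gt0 m n (psi : 'M[C]_(m, n)) :
  unit_state psi -> (0 < \rank psi)%N.
Proof.
rewrite unit_stateE lt0n mxrank_eq0; apply: contraTneq => ->.
by rewrite linear0 dotmxE mul0mx mxE eq_sym oner_eq0.
Qed.

Lemma exists_unit_state_mxrank m n (A : 'M[C]_(m, n)) :
  A != 0 -> exists psi : 'M[C]_(m, n), unit_state psi /\ \rank psi = \rank A.
Proof.
move=> /exists_unit_dotmx_mxvec [a a0 unit_aA].
by exists (a *: A); rewrite unit_stateE unit_aA mxrank_scale_nz.
Qed.

Lemma expect_W1_le1 m n (W : 'M[C]_m) (psi : 'M[C]_(m, n)) :
  unitary_mx W -> unit_state psi -> `|expect_W1 W psi| ^+ 2 <= 1.
Proof.
rewrite unitary_mxE unit_stateE expect_W1E => uW /eqP psi1.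
by apply: dotmx_unit_le1; rewrite ?dnorm_mxvec_unitary.
Qed.

Lemma expect_W1_eq1 m n (W : 'M[C]_m) (psi : 'M[C]_(m, n)) :
  unitary_mx W -> unit_state psi -> `|expect_W1 W psi| ^+ 2 = 1 ->
  exists c, W *m psi = c *: psi.
Proof.
rewrite unitary_mxE unit_stateE expect_W1E => uW /eqP psi1 /dotmx_unit_eq1.
case=> [||c Wpsi]; rewrite ?dnorm_mxvec_unitary //.
by exists c; apply: (can_inj mxvecK); rewrite linearZ.
Qed.

End BipartiteStates.

Section Spectrum.
Variables (C : numClosedFieldType) (dA : nat) (Lam : dA.-tuple C).

Lemma count_mem_le_max_mult c : (count_mem c Lam <= max_mult Lam)%N.
Proof.
have [c_in|c_notin] := boolP (c \in (Lam : seq C)); first exact: leq_bigmax_seq.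
by move/count_memPn: c_notin => ->.
Qed.

Lemma max_mult_le_size : (max_mult Lam <= dA)%N.
Proof.
by apply/bigmax_leqP_seq => c _ _; apply: leq_trans (count_size _ _) _; rewrite size_tuple.
Qed.

Lemma max_mult_attained :
  (0 < dA)%N -> exists2 l, l \in (Lam : seq C) & count_mem l Lam = max_mult Lam.
Proof.
rewrite -[X in (0 < X)%N]card_ord => dA_gt0.
have [i max_i] := bigop.eq_bigmax (fun i => count_mem (tnth Lam i) Lam) dA_gt0.
by exists (tnth Lam i); rewrite ?mem_tnth // /max_mult big_tuple max_i.
Qed.

Lemma max_mult_gt0 : (0 < dA)%N -> (0 < max_mult Lam)%N.
Proof. by case/max_mult_attained => l l_in <-; rewrite -has_count has_pred1. Qed.

Lemma max_mult_le1 : (max_mult Lam <= 1)%N = uniq Lam.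
Proof.
apply/idP/idP => [le1 | /count_uniq_mem uniqLam]; last first.
  by apply/bigmax_leqP_seq => c c_in _; rewrite uniqLam // leq_b1.
apply: count_mem_uniq => c; have le := leq_trans (count_mem_le_max_mult c) le1.
have [c_in|/count_memPn -> //] := boolP (c \in _).
by apply/eqP; rewrite eqn_leq le -has_count has_pred1.
Qed.

End Spectrum.

Section FidelityLambda.
Variables (C : numClosedFieldType) (dA dB : nat) (Lam : dA.-tuple C).
Implicit Types (psi : 'M[C]_(dA, dB)) (W : 'M[C]_dA).

Lemma rank_le_max_mult W psi : in_WLambda Lam W -> unit_state psi ->
  `|expect_W1 W psi| ^+ 2 = 1 -> (\rank psi <= max_mult Lam)%N.
Proof.
move=> [uW charW] psi1 /(expect_W1_eq1 uW psi1) [c Wpsi].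
have psiWt : psi^T *m W^T = c *: psi^T by rewrite -trmx_mul Wpsi linearZ.
rewrite -mxrank_tr; apply: leq_trans (count_mem_le_max_mult Lam c).
by apply: rank_le_count_eigenrows psiWt _; rewrite char_poly_trmx.
Qed.

Lemma exists_WLambda_expect_norm1 psi :
  unimodular_spectrum Lam -> unit_state psi -> (\rank psi <= max_mult Lam)%N ->
  exists2 W, in_WLambda Lam W & `|expect_W1 W psi| ^+ 2 = 1.
Proof.
move=> unitLam psi1 rank_le.
have dA_gt0 : (0 < dA)%N := leq_trans (unit_state_rank_gt0 psi1) (rank_leq_row _).
have [l l_in count_l] := max_mult_attained Lam dA_gt0.
have [|M [uM charM psiM]] := exists_unitary_eigenrows (size_tuple Lam) unitLam
  (_ : \rank psi^T <= count_mem l Lam)%N; first by rewrite mxrank_tr count_l.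
exists M^T; first by rewrite /in_WLambda unitary_mxE trmx_unitary char_poly_trmx.
have Mpsi : M^T *m psi = l *: psi by rewrite -[psi]trmxK -trmx_mul psiM linearZ.
move: psi1; rewrite unit_stateE expect_W1E Mpsi linearZ => /eqP psi1.
rewrite dotmxE -scalemxAl mxE -dotmxE psi1 mulr1.
by rewrite (eqP (allP unitLam l l_in)) expr1n.
Qed.

Lemma is_F_Lambda_uniq psi F F' :
  is_F_Lambda Lam psi F -> is_F_Lambda Lam psi F' -> F = F'.
Proof.
move=> [[W W_in <-] maxF] [[W' W'_in <-] maxF'].
by apply/eqP; rewrite eq_le maxF' // maxF.
Qed.

Lemma is_F_Lambda1 psi :
  unimodular_spectrum Lam -> unit_state psi -> (\rank psi <= max_mult Lam)%N ->
  is_F_Lambda Lam psi 1.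
Proof.
move=> unitLam psi1 rank_le; split; first exact: exists_WLambda_expect_norm1.
by move=> W [uW _]; apply: expect_W1_le1.
Qed.

Lemma E_Lambda_eq0 psi F :
  unimodular_spectrum Lam -> unit_state psi -> is_F_Lambda Lam psi F ->
  (E_Lambda F = 0 <-> (schmidt_rank psi <= max_mult Lam)%N).
Proof.
move=> unitLam psi1 F_psi; rewrite schmidt_rankE /E_Lambda; split.
  move=> /eqP; rewrite subr_eq0 => /eqP F1.
  by case: F_psi => -[W W_in]; rewrite -F1 => /(rank_le_max_mult W_in psi1).
move=> rank_le; rewrite (is_F_Lambda_uniq F_psi (is_F_Lambda1 unitLam psi1 rank_le)).
exact: subrr.
Qed.

End FidelityLambda.

Unset Implicit Arguments.

Theorem theorem3 (C : numClosedFieldType) (dA dB : nat) (Lam : dA.-tuple C) :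
  (dA <= dB)%N -> unimodular_spectrum Lam ->
  (forall (psi : 'M[C]_(dA, dB)) (F : C),
     unit_state psi -> is_F_Lambda Lam psi F ->
     (E_Lambda F = 0 <-> (schmidt_rank psi <= max_mult Lam)%N))
  /\
  ((forall (psi : 'M[C]_(dA, dB)) (F : C),
      unit_state psi -> is_F_Lambda Lam psi F ->
      (E_Lambda F = 0 <-> schmidt_rank psi = 1%N))
   <-> uniq Lam).
Proof.
move=> dA_le_dB unitLam; split=> [psi F|]; first exact: E_Lambda_eq0.
split=> [product_iff | uniqLam psi F psi1 F_psi].
  rewrite -max_mult_le1 leqNgt; apply/negP => max_mult_ge2.
  have dA_ge2 : (2 <= dA)%N := leq_trans max_mult_ge2 (max_mult_le_size Lam).
  have rank_pid2 : \rank (pid_mx 2 : 'M[C]_(dA, dB)) = 2%N.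
    by rewrite rank_pid_mx // (leq_trans dA_ge2 dA_le_dB).
  have [|psi [psi1]] := exists_unit_state_mxrank (A := pid_mx 2 : 'M[C]_(dA, dB)).
    by rewrite -mxrank_eq0 rank_pid2.
  rewrite rank_pid2 => rank_psi.
  have F1 : is_F_Lambda Lam psi 1 by apply: is_F_Lambda1; rewrite ?rank_psi.
  have := (product_iff psi 1 psi1 F1).1 (subrr 1).
  by rewrite schmidt_rankE rank_psi.
apply: (iff_trans (E_Lambda_eq0 unitLam psi1 F_psi)); rewrite schmidt_rankE.
have rank_gt0 := unit_state_rank_gt0 psi1.
have := max_mult_le1 Lam; rewrite uniqLam => /idP mult_le1.
split=> [rank_le | rank1]; first by apply/eqP; rewrite eqn_leq rank_gt0 (leq_trans rank_le mult_le1).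
by rewrite rank1 max_mult_gt0 // -rank1 (leq_trans _ (rank_leq_row psi)).
Qed.
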